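(* Let $U\subseteq\mathbb{C}$ be open and connected with $U\cap\mathbb{R}$ containing an interval, let $f \in \operatorname{Hol}(U, \mathbb{C}_+)$, and let $\varphi(\lambda) = a\lambda + b$ with $a > 0$ and $b \in \mathbb{R}$. Then $\varphi \circ f \in \operatorname{Hol}(U, \mathbb{C}_+)$ and \[ \mathcal{B}[\varphi \circ f](x, y) = a\,\mathcal{B}[f](a\,x,\; y - b\,x) + b. \] Equivalently, $\mathcal{B}[\varphi \circ f] = \varphi \circ \mathcal{B}[f] \circ T_\varphi$ with $T_\varphi(x,y) = (ax,\, y - bx)$, and $\Omega_{\varphi \circ f} = T_\varphi^{-1}(\Omega_f) = \{(x,y) : (ax, y-bx) \in \Omega_f\}$.
   Context: $\mathbb{C}_+$ is the upper half-plane and $\operatorname{Hol}(U,\mathbb{C}_+)$ the set of holomorphic functions $U\to\mathbb{C}_+$. The Burgers transform $\mathcal{B}[f]\colon\Omega_f\to\mathbb{C}_+$ is defined implicitly by $\mathcal{B}[f](x,y) = f(y - \mathcal{B}[f](x,y)\, x)$, where $\Omega_f \subseteq \mathbb{R}^2$ is the maximal open set on which this equation admits a unique $C^1$ solution with positive imaginary part. *)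

From Stdlib Require Import Reals.
From Coquelicot Require Import Coquelicot.
Open Scope R_scope.

Definition UHP (z : C) : Prop := 0 < Im z.

Definition openC (U : C -> Prop) : Prop := @open C_UniformSpace U.

Definition connectedC (U : C -> Prop) : Prop :=
  (exists z, U z) /\
  ~ (exists A B : C -> Prop, openC A /\ openC B /\
       (forall z, U z -> A z \/ B z) /\
       (forall z, U z -> A z -> B z -> False) /\
       (exists z, U z /\ A z) /\ (exists z, U z /\ B z)).

Definition real_trace_has_interval (U : C -> Prop) : Prop :=
  exists c d : R, c < d /\ forall t : R, c < t < d -> U (RtoC t).

Definition Hol_UHP (U : C -> Prop) (f : C -> C) : Prop :=
  forall z, U z -> @ex_derive C_AbsRing C_NormedModule f z /\ UHP (f z).

Definition openR2 (W : R * R -> Prop) : Prop :=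
  @open (prod_UniformSpace R_UniformSpace R_UniformSpace) W.

Definition dx (u : R * R -> R) (p : R * R) : R := Derive (fun t => u (t, snd p)) (fst p).
Definition dy (u : R * R -> R) (p : R * R) : R := Derive (fun t => u (fst p, t)) (snd p).

Definition C1r_on (W : R * R -> Prop) (u : R * R -> R) : Prop :=
  forall p, W p ->
    ex_derive (fun t => u (t, snd p)) (fst p) /\
    ex_derive (fun t => u (fst p, t)) (snd p) /\
    @continuous (prod_UniformSpace R_UniformSpace R_UniformSpace) R_UniformSpace (dx u) p /\
    @continuous (prod_UniformSpace R_UniformSpace R_UniformSpace) R_UniformSpace (dy u) p.

Definition C1_on (W : R * R -> Prop) (g : R * R -> C) : Prop :=
  C1r_on W (fun p => Re (g p)) /\ C1r_on W (fun p => Im (g p)).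

Definition burgers_sol (U : C -> Prop) (f : C -> C) (W : R * R -> Prop)
    (g : R * R -> C) : Prop :=
  C1_on W g /\
  forall p, W p ->
    UHP (g p) /\
    U (RtoC (snd p) - g p * RtoC (fst p))%C /\
    g p = f (RtoC (snd p) - g p * RtoC (fst p))%C.

Definition burgers_unique_on (U : C -> Prop) (f : C -> C) (W : R * R -> Prop) : Prop :=
  openR2 W /\
  (exists g, burgers_sol U f W g) /\
  (forall g1 g2, burgers_sol U f W g1 -> burgers_sol U f W g2 ->
     forall p, W p -> g1 p = g2 p).

(** Om is a maximal open set (w.r.t. inclusion) on which the equation admits a
    unique C^1 solution with positive imaginary part: this is Ω_f; the
    Burgers transform B[f] is then the (unique) solution on Om. *)
Definition burgers_domain (U : C -> Prop) (f : C -> C) (Om : R * R -> Prop) : Prop :=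
  burgers_unique_on U f Om /\
  forall W, burgers_unique_on U f W -> (forall p, Om p -> W p) -> forall p, W p -> Om p.

Definition is_burgers (U : C -> Prop) (f : C -> C) (Om : R * R -> Prop)
    (B : R * R -> C) : Prop :=
  burgers_domain U f Om /\ burgers_sol U f Om B.

(* Write phi(l) = a l + b and T(x, y) = (a x, y - b x).  Since
   y - phi(G) x = (y - b x) - G (a x), a function g solves g = f(y - g x) on W
   iff phi o g o T solves the equation for phi o f on T^-1(W); C^1 regularity,
   openness and Im > 0 (as a > 0) are preserved by these affine changes.  The
   inverses of phi and T are of the same form, with parameters (1/a, -b/a), so
   this is a bijection between solutions and between candidate open sets; it
   therefore preserves uniqueness and maximality, i.e. Omega_f and B[f]. *)

From Stdlib Require Import Reals Lra FunctionalExtensionality.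
From Coquelicot Require Import Coquelicot.
Open Scope R_scope.

Definition shear (a b : R) (p : R * R) : R * R := (a * fst p, snd p - b * fst p).

Definition affC (a b : R) (z : C) : C := (RtoC a * z + RtoC b)%C.

Lemma shear_inv_l a b p : a <> 0 -> shear (/ a) (- b / a) (shear a b p) = p.
Proof. intros Ha. destruct p as [x y]. unfold shear; simpl. f_equal; field; exact Ha. Qed.

Lemma shear_inv_r a b p : a <> 0 -> shear a b (shear (/ a) (- b / a) p) = p.
Proof. intros Ha. destruct p as [x y]. unfold shear; simpl. f_equal; field; exact Ha. Qed.

Lemma affC_inv_l a b z : a <> 0 -> affC (/ a) (- b / a) (affC a b z) = z.
Proof.
  intros Ha. destruct z as [x y]. unfold affC, Cplus, Cmult, RtoC; simpl.
  f_equal; field; exact Ha.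
Qed.

Lemma affC_inv_r a b z : a <> 0 -> affC a b (affC (/ a) (- b / a) z) = z.
Proof.
  intros Ha. destruct z as [x y]. unfold affC, Cplus, Cmult, RtoC; simpl.
  f_equal; field; exact Ha.
Qed.

Lemma Re_affC a b z : Re (affC a b z) = a * Re z + b.
Proof. destruct z as [x y]. unfold affC, Cplus, Cmult, RtoC; simpl. ring. Qed.

Lemma Im_affC a b z : Im (affC a b z) = a * Im z.
Proof. destruct z as [x y]. unfold affC, Cplus, Cmult, RtoC; simpl. ring. Qed.

Lemma continuous_shear a b p : continuous (shear a b) p.
Proof.
  destruct p as [x y].
  apply (continuous_comp_2 (fun p => a * fst p) (fun p => snd p - b * fst p) pair).
  - apply (continuous_mult (K := R_AbsRing)); [apply continuous_const | apply continuous_fst].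
  - apply (continuous_minus (K := R_AbsRing) (V := R_NormedModule)); [apply continuous_snd|].
    apply (continuous_mult (K := R_AbsRing)); [apply continuous_const | apply continuous_fst].
  - apply (continuous_ext (fun q => q)); [intros [s t]; reflexivity | apply continuous_id].
Qed.

Lemma openR2_shear_preimage a b W : openR2 W -> openR2 (fun p => W (shear a b p)).
Proof. intros HW. apply open_comp; [intros p _; apply continuous_shear | exact HW]. Qed.

Lemma C1r_on_differentiable W u p : openR2 W -> C1r_on W u -> W p ->
  differentiable_pt_lim (fun s t => u (s, t)) (fst p) (snd p) (dx u p) (dy u p).
Proof.
  intros HW Hu Hp. destruct p as [x y].
  apply filterdiff_differentiable_pt_lim.
  apply (is_derive_filterdiff (fun s t => u (s, t)) x y (fun s t => dx u (s, t))).
  - apply (filter_imp W); [|exact (HW _ Hp)].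
    intros [s t] Hst. apply Derive_correct, (Hu _ Hst).
  - apply Derive_correct, (Hu _ Hp).
  - apply (continuous_ext (dx u)); [intros [s t]; reflexivity | apply (Hu _ Hp)].
Qed.

Lemma is_derive_shear_x W u a b p : openR2 W -> C1r_on W u -> W (shear a b p) ->
  is_derive (fun t => u (shear a b (t, snd p))) (fst p)
    (a * dx u (shear a b p) - b * dy u (shear a b p)).
Proof.
  intros HW Hu Hp. apply is_derive_Reals.
  replace (a * dx u (shear a b p) - b * dy u (shear a b p))
    with (dx u (shear a b p) * a + dy u (shear a b p) * (- b)) by ring.
  apply (derivable_pt_lim_comp_2d (fun s t => u (s, t))
           (fun t => a * t) (fun t => snd p - b * t)).
  - exact (C1r_on_differentiable W u _ HW Hu Hp).
  - apply is_derive_Reals. auto_derive; [exact I | ring].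
  - apply is_derive_Reals. auto_derive; [exact I | ring].
Qed.

Lemma is_derive_shear_y W u a b p : openR2 W -> C1r_on W u -> W (shear a b p) ->
  is_derive (fun t => u (shear a b (fst p, t))) (snd p) (dy u (shear a b p)).
Proof.
  intros HW Hu Hp. apply is_derive_Reals.
  replace (dy u (shear a b p)) with (dx u (shear a b p) * 0 + dy u (shear a b p) * 1) by ring.
  apply (derivable_pt_lim_comp_2d (fun s t => u (s, t))
           (fun _ => a * fst p) (fun t => t - b * fst p)).
  - exact (C1r_on_differentiable W u _ HW Hu Hp).
  - apply is_derive_Reals. auto_derive; [exact I | ring].
  - apply is_derive_Reals. auto_derive; [exact I | ring].
Qed.

Lemma C1r_on_shear W u a b : openR2 W -> C1r_on W u ->
  C1r_on (fun p => W (shear a b p)) (fun p => u (shear a b p)).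
Proof.
  intros HW Hu p Hp.
  assert (Hnear : locally p (fun q => W (shear a b q)))
    by exact (openR2_shear_preimage a b W HW p Hp).
  assert (Hcomp : forall v : R * R -> R,
             continuous v (shear a b p) -> continuous (fun q => v (shear a b q)) p)
    by (intros v; apply continuous_comp, continuous_shear).
  destruct (Hu _ Hp) as [_ [_ [Hdx Hdy]]].
  split; [|split; [|split]].
  - eexists. exact (is_derive_shear_x W u a b p HW Hu Hp).
  - eexists. exact (is_derive_shear_y W u a b p HW Hu Hp).
  - apply (continuous_ext_loc _ (fun q => a * dx u (shear a b q) - b * dy u (shear a b q))).
    + apply (filter_imp _ _ (fun q Hq => eq_sym (is_derive_unique _ _ _
               (is_derive_shear_x W u a b q HW Hu Hq))) Hnear).
    + apply (continuous_minus (K := R_AbsRing) (V := R_NormedModule)).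
      * apply (continuous_mult (K := R_AbsRing)); [apply continuous_const | apply Hcomp, Hdx].
      * apply (continuous_mult (K := R_AbsRing)); [apply continuous_const | apply Hcomp, Hdy].
  - apply (continuous_ext_loc _ (fun q => dy u (shear a b q))).
    + apply (filter_imp _ _ (fun q Hq => eq_sym (is_derive_unique _ _ _
               (is_derive_shear_y W u a b q HW Hu Hq))) Hnear).
    + apply Hcomp, Hdy.
Qed.

Lemma is_derive_affine g x l c d : is_derive g x l -> is_derive (fun t => c * g t + d) x (c * l).
Proof.
  intros H. rewrite <- (Rplus_0_r (c * l)).
  apply (is_derive_plus (fun t => c * g t) (fun _ => d)).
  - apply is_derive_scal, H.
  - apply (is_derive_const (K := R_AbsRing) (V := R_NormedModule)).
Qed.

Lemma C1r_on_affine W u c d : openR2 W -> C1r_on W u -> C1r_on W (fun p => c * u p + d).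
Proof.
  intros HW Hu p Hp.
  assert (Hdx : forall q, W q -> is_derive (fun t => c * u (t, snd q) + d) (fst q) (c * dx u q))
    by (intros q Hq; apply is_derive_affine, Derive_correct, (Hu _ Hq)).
  assert (Hdy : forall q, W q -> is_derive (fun t => c * u (fst q, t) + d) (snd q) (c * dy u q))
    by (intros q Hq; apply is_derive_affine, Derive_correct, (Hu _ Hq)).
  destruct (Hu _ Hp) as [_ [_ [Cdx Cdy]]].
  split; [|split; [|split]].
  - eexists. exact (Hdx p Hp).
  - eexists. exact (Hdy p Hp).
  - apply (continuous_ext_loc _ (fun q => c * dx u q)).
    + apply (filter_imp _ _ (fun q Hq => eq_sym (is_derive_unique _ _ _ (Hdx q Hq))) (HW p Hp)).
    + apply (continuous_mult (K := R_AbsRing)); [apply continuous_const | exact Cdx].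
  - apply (continuous_ext_loc _ (fun q => c * dy u q)).
    + apply (filter_imp _ _ (fun q Hq => eq_sym (is_derive_unique _ _ _ (Hdy q Hq))) (HW p Hp)).
    + apply (continuous_mult (K := R_AbsRing)); [apply continuous_const | exact Cdy].
Qed.

Lemma C1_on_affC_shear W g a b c d : openR2 W -> C1_on W g ->
  C1_on (fun p => W (shear a b p)) (fun p => affC c d (g (shear a b p))).
Proof.
  intros HW [HRe HIm].
  assert (HW' := openR2_shear_preimage a b W HW).
  split.
  - replace (fun p => Re (affC c d (g (shear a b p))))
      with (fun p => c * Re (g (shear a b p)) + d)
      by (apply functional_extensionality; intros p; symmetry; apply Re_affC).
    apply C1r_on_affine; [exact HW' | exact (C1r_on_shear W _ a b HW HRe)].
  - replace (fun p => Im (affC c d (g (shear a b p))))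
      with (fun p => c * Im (g (shear a b p)) + 0)
      by (apply functional_extensionality; intros p; rewrite Im_affC; ring).
    apply C1r_on_affine; [exact HW' | exact (C1r_on_shear W _ a b HW HIm)].
Qed.

Lemma ex_derive_affC (f : C -> C) a b z :
  @ex_derive C_AbsRing C_NormedModule f z ->
  @ex_derive C_AbsRing C_NormedModule (fun t => affC a b (f t)) z.
Proof.
  intros [l Hl]. exists (RtoC a * l)%C. unfold is_derive in *.
  apply (@filterdiff_ext_lin C_AbsRing (AbsRing_NormedModule C_AbsRing) C_NormedModule _ _ _
           (fun y => plus (scal (RtoC a) (scal y l)) (@zero C_NormedModule))).
  - apply (@filterdiff_plus_fct C_AbsRing (AbsRing_NormedModule C_AbsRing) C_NormedModule _ _
             (fun t => scal (RtoC a) (f t)) (fun _ => RtoC b)).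
    + apply (@filterdiff_scal_r_fct C_AbsRing (AbsRing_NormedModule C_AbsRing) C_NormedModule _ _
               (RtoC a) f (fun y => scal y l)); [exact Cmult_comm | exact Hl].
    + apply filterdiff_const.
  - intros y. change ((RtoC a * (y * l) + RtoC 0)%C = (y * (RtoC a * l))%C).
    rewrite Cplus_0_r, !Cmult_assoc, (Cmult_comm y). reflexivity.
Qed.

Lemma UHP_affC a b z : 0 < a -> UHP z -> UHP (affC a b z).
Proof. unfold UHP. rewrite Im_affC. intros Ha Hz. apply Rmult_lt_0_compat; assumption. Qed.

Lemma Hol_UHP_affC U f a b : 0 < a -> Hol_UHP U f -> Hol_UHP U (fun z => affC a b (f z)).
Proof.
  intros Ha Hf z Hz. destruct (Hf z Hz) as [Hd Hi].
  split; [apply ex_derive_affC, Hd | apply UHP_affC, Hi; exact Ha].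
Qed.

Lemma burgers_arg_affC a b x y G :
  (RtoC y - affC a b G * RtoC x = RtoC (y - b * x) - G * RtoC (a * x))%C.
Proof.
  destruct G as [g1 g2]. unfold affC, Cminus, Cplus, Cmult, Copp, RtoC; simpl.
  f_equal; ring.
Qed.

Lemma burgers_sol_affC U f W g a b : 0 < a -> openR2 W -> burgers_sol U f W g ->
  burgers_sol U (fun z => affC a b (f z)) (fun p => W (shear a b p))
    (fun p => affC a b (g (shear a b p))).
Proof.
  intros Ha HW [Hg Hsol]. split; [apply C1_on_affC_shear; assumption|].
  intros p Hp. destruct (Hsol _ Hp) as [HI [HU HE]].
  rewrite burgers_arg_affC.
  split; [apply UHP_affC; assumption | split; [exact HU | exact (f_equal (affC a b) HE)]].
Qed.

Lemma affC_comp_inv (f : C -> C) a b : a <> 0 ->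
  (fun z => affC (/ a) (- b / a) (affC a b (f z))) = f.
Proof. intros Ha. apply functional_extensionality. intros z. apply affC_inv_l, Ha. Qed.

Lemma shear_preimage_inv (W : R * R -> Prop) a b : a <> 0 ->
  (fun p => W (shear a b (shear (/ a) (- b / a) p))) = W.
Proof.
  intros Ha. apply functional_extensionality. intros p.
  rewrite shear_inv_r; [reflexivity | exact Ha].
Qed.

Lemma burgers_sol_affC_inv U f W h a b : 0 < a -> openR2 W ->
  burgers_sol U (fun z => affC a b (f z)) (fun p => W (shear a b p)) h ->
  burgers_sol U f W (fun p => affC (/ a) (- b / a) (h (shear (/ a) (- b / a) p))).
Proof.
  intros Ha HW Hh. assert (Ha0 : a <> 0) by lra.
  rewrite <- (affC_comp_inv f a b Ha0), <- (shear_preimage_inv W a b Ha0).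
  exact (burgers_sol_affC U _ _ h (/ a) (- b / a) (Rinv_0_lt_compat a Ha)
           (openR2_shear_preimage a b W HW) Hh).
Qed.

Lemma burgers_unique_on_affC U f W a b : 0 < a -> burgers_unique_on U f W ->
  burgers_unique_on U (fun z => affC a b (f z)) (fun p => W (shear a b p)).
Proof.
  intros Ha [HW [[g Hg] Huniq]].
  assert (Ha0 : a <> 0) by lra.
  split; [apply openR2_shear_preimage, HW|].
  split; [eexists; apply burgers_sol_affC; eassumption|].
  intros h1 h2 H1 H2 p Hp.
  assert (E := Huniq _ _ (burgers_sol_affC_inv U f W h1 a b Ha HW H1)
                        (burgers_sol_affC_inv U f W h2 a b Ha HW H2) _ Hp).
  cbv beta in E. rewrite shear_inv_l in E by exact Ha0.
  rewrite <- (affC_inv_r a b (h1 p) Ha0), <- (affC_inv_r a b (h2 p) Ha0), E.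
  reflexivity.
Qed.

Lemma burgers_domain_affC U f Om a b : 0 < a -> burgers_domain U f Om ->
  burgers_domain U (fun z => affC a b (f z)) (fun p => Om (shear a b p)).
Proof.
  intros Ha [HOm Hmax].
  assert (Ha0 : a <> 0) by lra.
  assert (Hainv : 0 < / a) by (apply Rinv_0_lt_compat, Ha).
  split; [apply burgers_unique_on_affC; assumption|].
  intros W HW Hsub q Hq.
  assert (HWback := burgers_unique_on_affC U _ W (/ a) (- b / a) Hainv HW).
  cbv beta in HWback. rewrite (affC_comp_inv f a b Ha0) in HWback.
  apply (Hmax _ HWback).
  - intros p Hp. apply Hsub. rewrite shear_inv_r by exact Ha0. exact Hp.
  - rewrite shear_inv_l by exact Ha0. exact Hq.
Qed.

Lemma burgers_domain_affC_iff U f Om a b : 0 < a ->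
  burgers_domain U f Om <->
  burgers_domain U (fun z => affC a b (f z)) (fun p => Om (shear a b p)).
Proof.
  intros Ha. assert (Ha0 : a <> 0) by lra.
  split; [apply burgers_domain_affC, Ha|].
  intros H.
  rewrite <- (affC_comp_inv f a b Ha0), <- (shear_preimage_inv Om a b Ha0).
  exact (burgers_domain_affC U _ _ (/ a) (- b / a) (Rinv_0_lt_compat a Ha) H).
Qed.

Theorem proposition6p4 (U : C -> Prop) (f : C -> C) (a b : R) :
  openC U -> connectedC U -> real_trace_has_interval U ->
  Hol_UHP U f -> 0 < a ->
  let phi := fun l : C => (RtoC a * l + RtoC b)%C in
  let T := fun p : R * R => (a * fst p, snd p - b * fst p) in
  Hol_UHP U (fun z => phi (f z)) /\
  (forall Om : R * R -> Prop,
     burgers_domain U f Om <-> burgers_domain U (fun z => phi (f z)) (fun p => Om (T p))) /\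
  (forall (Om : R * R -> Prop) (B : R * R -> C),
     is_burgers U f Om B ->
     is_burgers U (fun z => phi (f z)) (fun p => Om (T p)) (fun p => phi (B (T p)))).
Proof.
  intros _ _ _ Hf Ha phi T.
  split; [|split].
  - exact (Hol_UHP_affC U f a b Ha Hf).
  - intros Om. exact (burgers_domain_affC_iff U f Om a b Ha).
  - intros Om B [HOm HB]. split.
    + exact (burgers_domain_affC U f Om a b Ha HOm).
    + exact (burgers_sol_affC U f Om B a b Ha (proj1 (proj1 HOm)) HB).
Qed.
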